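(* Consider an execution of the MBA protocol (described in the context) with $n\ge 3t+1$ players of which at most $t$ are malicious. If, for some component $c\in\{1,\dots,m\}$, the honest players obtain $b_c=0$ in the common bit vector $\mathbf b$ output by STEP 3, then the honest players reach $c$-agreement on a value $v\neq\bot$ in the $c$-th component of their MBA outputs.
   Context: Network model: $n$ players; every pair joined by a direct private channel; synchronous steps, instantaneous delivery; at most $t$ malicious players, honest players follow the protocol and send the same message to everyone. $\#_i^s(v,c)$ is the number of distinct players from which $i$ received in step $s$ a valid vector message whose $c$-th component is $v$ (counting its own; conflicting messages from one sender discarded, duplicates once). $c$-agreement on outputs: all honest players have the same $c$-th output component. MGC (two steps): STEP 1: each $i$ sends its initial vector $\mathbf{v}_i'\in(V\cup\{\bot\})^m$. STEP 2: each $i$ sends $\tilde{\mathbf v}_i$ with $\tilde v_{i,c}=v$ if $\#_i^1(v,c)\ge\lfloor\frac{2n}3\rfloor+1$, else $\bot$. Output: $(v_{i,c},g_{i,c})=(x,2)$ if $\#_i^2(x,c)\ge\lfloor\frac{2n}3\rfloor+1$ for some $x\ne\bot$; else $(x,1)$ if $\#_i^2(x,c)\ge\lfloor\frac n3\rfloor+1$ for some $x\ne\bot$; else $(\bot,0)$. MBBA (on bit vectors $\mathbf b_i\in\{0,1\}^m$; $\mathbf f_i$ initially zero; $H$ a random oracle, $\mathrm{SIG}_i$ unique signatures, $r$ common random string, counter $\gamma=0$): EXIT CHECK: if $\mathbf f_i$ is all ones, send $\mathbf b_i$ as final (reused by receivers in later steps), output $\mathbf b_i$, halt. STEP 1: send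 $\mathbf b_i$; for $c$ with $f_{i,c}=0$: if $\#_i^1(0,c)>\frac23n$ set $b_{i,c}=0,f_{i,c}=1$ and EXIT CHECK; else if $\#_i^1(1,c)>\frac23n$ set $b_{i,c}=1$; else $0$. STEP 2: send $\mathbf b_i$; for $c$ with $f_{i,c}=0$: if $\#_i^2(1,c)>\frac23n$ set $b_{i,c}=1,f_{i,c}=1$ and EXIT CHECK; else if $\#_i^2(0,c)>\frac23n$ set $0$; else $1$. STEP 3: send $\mathrm{SIG}_i(r\|\gamma)$ and $\mathbf b_i$; for $c$ with $f_{i,c}=0$: if $\#_i^3(0,c)>\frac23n$ set 0; else if $\#_i^3(1,c)>\frac23n$ set 1; else set $b_{i,c}$ to the $c$-th bit of $H(\min_{j\in P_i}H(\mathrm{SIG}_j(r\|\gamma)))$, $P_i$ the senders of valid STEP 3 messages to $i$; $\gamma\leftarrow\gamma+1$, go to STEP 1. MBA: each player $i$ has initial vector $\mathbf v_i'\in(V\cup\{\bot\})^m$. STEPS 1–2: run the two steps of MGC, obtaining $(\mathbf v_i,\mathbf g_i)$. STEP 3: run MBBA with initial bits $b_{i,c}=0$ if $g_{i,c}=2$ and $b_{i,c}=1$ otherwise; its output $\mathbf b$ is the output of STEP 3. OUTPUT: $o_{i,c}=v_{i,c}$ if $b_{c}=0$ and $o_{i,c}=\bot$ if $b_{c}=1$. *)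

(* Model of one execution of MBA (MGC + MBBA) in the
   synchronous full-information model with a set H of honest players. *)
From mathcomp Require Import all_boot.

Section MBA.

(* V : value set (bottom is represented by None : option V);
   n players 'I_n, vectors of length m indexed by 'I_m;
   H : the set of honest players. *)
Variables (V : eqType) (n m : nat) (H : {set 'I_n}).

(* first element of s satisfying p (used to select the value meeting a
   threshold; such a value is unique whenever it matters). *)
Definition first_sat {T : Type} (p : pred T) (s : seq T) : option T :=
  ohead (filter p s).

Variable vinit : 'I_n -> 'I_m -> option V.
(* adv1 j i / adv2 j i : the (possibly absent/invalid = None) vector message
   that malicious player j sends to player i in MGC step 1 / step 2
   (conflicting messages are discarded, so at most one message per
   sender and receiver). *)
Variables adv1 adv2 : 'I_n -> 'I_n -> option ('I_m -> option V).

(* #_i(x,c) for a message table msg (msg j i = message from j received by i) *)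
Definition cntV (msg : 'I_n -> 'I_n -> option ('I_m -> option V))
  (i : 'I_n) (x : option V) (c : 'I_m) : nat :=
  #|[set j : 'I_n | if msg j i is Some w then w c == x else false]|.

Definition candsV (msg : 'I_n -> 'I_n -> option ('I_m -> option V))
  (i : 'I_n) (c : 'I_m) : seq (option V) :=
  pmap (fun j => omap (fun w => w c) (msg j i)) (enum 'I_n).

Definition msg1 (j i : 'I_n) : option ('I_m -> option V) :=
  if j \in H then Some (vinit j) else adv1 j i.

Definition tilde (i : 'I_n) (c : 'I_m) : option V :=
  odflt None
    (first_sat (fun x => (2 * n) %/ 3 < cntV msg1 i x c) (candsV msg1 i c)).

Definition msg2 (j i : 'I_n) : option ('I_m -> option V) :=
  if j \in H then Some (tilde j) else adv2 j i.

Definition mgc_out (i : 'I_n) (c : 'I_m) : option V * nat :=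
  match first_sat (fun x => (x != None) && ((2 * n) %/ 3 < cntV msg2 i x c))
                  (candsV msg2 i c) with
  | Some x => (x, 2)
  | None =>
    match first_sat (fun x => (x != None) && (n %/ 3 < cntV msg2 i x c))
                    (candsV msg2 i c) with
    | Some x => (x, 1)
    | None => (None, 0)
    end
  end.

(* local state of a player: bits b_i, flags f_i, halted? *)
Record bstate := BState { bb : 'I_m -> bool; bf : 'I_m -> bool; bh : bool }.

(* advB k j i : the message (bit vector; in a STEP 3 it is accompanied by
   j's unique valid signature) that malicious j sends to i in global MBBA
   step k (k = 0,1,2,... ; step type k %% 3, coin counter gamma = k %/ 3);
   None = no valid message. *)
Variable advB : nat -> 'I_n -> 'I_n -> option ('I_m -> bool).
(* Hs j g = H(SIG_j(r || g)) (as a number); Hb h c = c-th bit of H(h). *)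
Variable Hs : 'I_n -> nat -> nat.
Variable Hb : nat -> 'I_m -> bool.

(* message received by i from j in step k; an honest halted player's
   final message is reused (its state is frozen). *)
Definition msgB (st : 'I_n -> bstate) (k : nat) (j i : 'I_n)
  : option ('I_m -> bool) :=
  if j \in H then Some (bb (st j)) else advB k j i.

Definition cntB (st : 'I_n -> bstate) (k : nat) (i : 'I_n) (x : bool)
  (c : 'I_m) : nat :=
  #|[set j : 'I_n | if msgB st k j i is Some w then w c == x else false]|.

Definition gt_two_thirds (a : nat) : bool := 2 * n < 3 * a.

(* P_i : senders of valid STEP 3 messages to i *)
Definition coinP (st : 'I_n -> bstate) (k : nat) (i : 'I_n) : {set 'I_n} :=
  [set j : 'I_n | if j \in H then ~~ bh (st j) else isSome (advB k j i)].

(* neutral element for the minimum below (an upper bound of all Hs j g);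
   irrelevant since P_i is nonempty whenever the coin is used *)
Definition maxHs (g : nat) : nat := \max_(j < n) Hs j g.

Definition coin (st : 'I_n -> bstate) (k : nat) (i : 'I_n) (c : 'I_m) : bool :=
  Hb (\big[minn/maxHs (k %/ 3)]_(j in coinP st k i) Hs j (k %/ 3)) c.

Definition upd (st : 'I_n -> bstate) (k : nat) (i : 'I_n) (c : 'I_m)
  : bool * bool :=
  let b := bb (st i) c in
  if bf (st i) c then (b, true) else
  let z := gt_two_thirds (cntB st k i false c) in
  let o := gt_two_thirds (cntB st k i true c) in
  match k %% 3 with
  | 0 => if z then (false, true) else if o then (true, false) else (false, false)
  | 1 => if o then (true, true) else if z then (false, false) else (true, false)
  | _ => if z then (false, false) else if o then (true, false)
         else (coin st k i c, false)
  end.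

Definition bstep (st : 'I_n -> bstate) (k : nat) (i : 'I_n) : bstate :=
  if bh (st i) then st i else
  let nb := fun c => (upd st k i c).1 in
  let nf := fun c => (upd st k i c).2 in
  BState nb nf ([exists c, nf c && ~~ bf (st i) c] && [forall c, nf c]).

Definition binit (i : 'I_n) : bstate :=
  BState (fun c => (mgc_out i c).2 != 2) (fun _ => false) false.

Fixpoint bexec (k : nat) : 'I_n -> bstate :=
  match k with
  | 0 => binit
  | k'.+1 => fun i => bstep (bexec k') k' i
  end.

Definition mba_out (K : nat) (i : 'I_n) (c : 'I_m) : option V :=
  if bb (bexec K i) c then None else (mgc_out i c).1.

End MBA.

From Pilot Require Import Defs.
From mathcomp Require Import all_boot zify.

(* If MBBA decides 0 on component c, some honest player entered it with bit
   0, i.e. with MGC grade 2: MBBA never moves the honest players off a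
   unanimous bit, since its 2n/3 thresholds are out of reach of the at most
   t malicious votes.  Graded consistency of MGC then makes every player's
   value equal to that player's non-bottom value: two quorums of more than
   2n/3 players share an honest one, so honest STEP 2 values agree; a value
   sent by more than n/3 players in STEP 2 was sent by an honest one; and a
   count above 2n/3 at one receiver is above n/3 at every other. *)

Set Implicit Arguments.
Unset Strict Implicit.
Unset Printing Implicit Defensive.

Lemma first_sat_Some (T : Type) (p : pred T) s x :
  first_sat p s = Some x -> p x.
Proof.
rewrite /first_sat; elim: s => //= y s IHs.
by case: ifP => [py [<-] | _ /IHs].
Qed.

Lemma first_sat_None (T : Type) (p : pred T) s :
  first_sat p s = None -> ~~ has p s.
Proof. by rewrite /first_sat has_count -size_filter; case: filter. Qed.

Section HonestMajority.

Variables (n t : nat) (H : {set 'I_n}).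
Hypothesis few_malicious : #|~: H| <= t.

Lemma card_le_honest (S : {set 'I_n}) : #|S| <= #|S :&: H| + t.
Proof.
rewrite -(cardsID H S) leq_add2l (leq_trans _ few_malicious) //.
by apply: subset_leq_card; rewrite setDE subsetIr.
Qed.

Lemma honest_in (S : {set 'I_n}) : t < #|S| -> exists2 j, j \in H & j \in S.
Proof.
move=> ltS; have : 0 < #|S :&: H| by have := card_le_honest S; lia.
by case/card_gt0P => j; rewrite inE => /andP [jS jH]; exists j.
Qed.

Hypothesis resilience : 3 * t + 1 <= n.

Lemma quorums_share_honest (S S' : {set 'I_n}) :
  (2 * n) %/ 3 < #|S| -> (2 * n) %/ 3 < #|S'| ->
  exists2 j, j \in H & j \in S :&: S'.
Proof.
move=> ltS ltS'; apply: honest_in.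
have : #|S :|: S'| <= n by rewrite -[X in _ <= X]card_ord max_card.
have := cardsU S S'; lia.
Qed.

End HonestMajority.

Section GradedConsensus.

Variables (V : eqType) (n m t : nat) (H : {set 'I_n}).
Hypotheses (resilience : 3 * t + 1 <= n) (few_malicious : #|~: H| <= t).
Variables (vinit : 'I_n -> 'I_m -> option V).
Variables (adv1 adv2 : 'I_n -> 'I_n -> option ('I_m -> option V)).
Variable c : 'I_m.

Local Notation tilde := (tilde V n m H vinit adv1).
Local Notation msg1 := (msg1 V n m H vinit adv1).
Local Notation msg2 := (msg2 V n m H vinit adv1 adv2).
Local Notation mgc_out := (mgc_out V n m H vinit adv1 adv2).
Local Notation cnt msg i x := (cntV V n m msg i x c).

Lemma cntV_gt0_cands msg i x : 0 < cnt msg i x -> x \in candsV V n m msg i c.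
Proof.
case/card_gt0P => j; rewrite inE mem_pmap; case msg_j: (msg j i) => [w|] //.
by move/eqP=> <-; apply/mapP; exists j; rewrite ?mem_enum ?msg_j.
Qed.

Lemma tilde_cnt j v : tilde j c = Some v -> (2 * n) %/ 3 < cnt msg1 j (Some v).
Proof.
rewrite /Defs.tilde; case sel: first_sat => [x|] //= <-.
exact: first_sat_Some sel.
Qed.

Lemma tilde_consistent j j' v v' :
  tilde j c = Some v -> tilde j' c = Some v' -> v = v'.
Proof.
move=> /tilde_cnt quorum /tilde_cnt quorum'.
have [k kH] := quorums_share_honest few_malicious resilience quorum quorum'.
by rewrite !inE /Defs.msg1 kH => /andP [/eqP-> /eqP[]].
Qed.

Lemma msg2_backed_by_honest i x :
  t < cnt msg2 i x -> exists2 j, j \in H & tilde j c = x.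
Proof.
case/(honest_in few_malicious) => j jH.
by rewrite inE /Defs.msg2 jH => /eqP; exists j.
Qed.

Lemma msg2_value_unique i i' x x' : x != None -> x' != None ->
  t < cnt msg2 i x -> t < cnt msg2 i' x' -> x = x'.
Proof.
case: x x' => [v|] // [v'|] // _ _.
case/msg2_backed_by_honest=> j _ tj /msg2_backed_by_honest [j' _ tj'].
by rewrite (tilde_consistent tj tj').
Qed.

Lemma cnt_msg2_transfer i i' x : cnt msg2 i x <= cnt msg2 i' x + t.
Proof.
apply: leq_trans (card_le_honest few_malicious _) _; rewrite leq_add2r.
apply: subset_leq_card; apply/subsetP => j; rewrite !inE /Defs.msg2.
by case: (j \in H); rewrite ?andbT ?andbF.
Qed.

Lemma mgc_out_cnt i :
  (mgc_out i c).1 != None -> n %/ 3 < cnt msg2 i (mgc_out i c).1.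
Proof.
rewrite /Defs.mgc_out; case sel2: first_sat => [x|] /=.
  case/andP: (first_sat_Some sel2) => _ lt2 _.
  by apply: leq_ltn_trans lt2; apply: leq_div2r; lia.
case sel1: first_sat => [x|] //= _.
by case/andP: (first_sat_Some sel1).
Qed.

Lemma mgc_out_grade2 i : (mgc_out i c).2 = 2 ->
  (mgc_out i c).1 != None /\ (2 * n) %/ 3 < cnt msg2 i (mgc_out i c).1.
Proof.
rewrite /Defs.mgc_out; case sel2: first_sat => [x|] /=.
  by move=> _; apply/andP; apply: first_sat_Some sel2.
by case: first_sat.
Qed.

Lemma mgc_out_defined i x :
  x != None -> n %/ 3 < cnt msg2 i x -> (mgc_out i c).1 != None.
Proof.
move=> xN lt1; rewrite /Defs.mgc_out.
case sel2: first_sat => [y|] /=; first by case/andP: (first_sat_Some sel2).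
case sel1: first_sat => [y|] /=; first by case/andP: (first_sat_Some sel1).
case/hasP: (first_sat_None sel1); exists x; last by rewrite xN.
by apply: cntV_gt0_cands; lia.
Qed.

Lemma mgc_graded_agreement i0 i :
  (mgc_out i0 c).2 = 2 -> (mgc_out i c).1 = (mgc_out i0 c).1.
Proof.
case/mgc_out_grade2 => x0N lt2.
have lt1 : n %/ 3 < cnt msg2 i (mgc_out i0 c).1.
  by have := cnt_msg2_transfer i0 i (mgc_out i0 c).1; lia.
have xN := mgc_out_defined x0N lt1.
apply: (msg2_value_unique (i := i) (i' := i0) xN x0N); last by lia.
by have := mgc_out_cnt xN; lia.
Qed.

End GradedConsensus.

Section BinaryValidity.

Variables (n m t : nat) (H : {set 'I_n}).
Hypotheses (resilience : 3 * t + 1 <= n) (few_malicious : #|~: H| <= t).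
Variables (advB : nat -> 'I_n -> 'I_n -> option ('I_m -> bool)).
Variables (Hs : 'I_n -> nat -> nat) (Hb : nat -> 'I_m -> bool).
Variables (c : 'I_m) (b : bool).

Definition unanimous (st : 'I_n -> bstate m) :=
  forall i, i \in H -> bb m (st i) c = b.

Local Notation cnt st k i x := (cntB n m H advB st k i x c).

Lemma cntB_unanimous st k i : unanimous st ->
  gt_two_thirds n (cnt st k i b) /\ ~~ gt_two_thirds n (cnt st k i (~~ b)).
Proof.
move=> st_b; rewrite /gt_two_thirds.
have honest_votes : #|H| <= cnt st k i b.
  apply: subset_leq_card; apply/subsetP => j jH.
  by rewrite inE /msgB jH st_b.
have malicious_votes : cnt st k i (~~ b) <= t.
  apply: leq_trans few_malicious; apply: subset_leq_card; apply/subsetP => j.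
  by rewrite !inE /msgB; case: ifP => // jH; rewrite st_b //; case: b.
have : #|H| + #|~: H| = n by rewrite cardsC card_ord.
lia.
Qed.

Lemma bstep_unanimous st k :
  unanimous st -> unanimous (bstep n m H advB Hs Hb st k).
Proof.
move=> st_b i iH; rewrite /bstep; case: ifP => _; first exact: st_b.
rewrite /= /upd; case: ifP => _ /=; first exact: st_b.
have [gt_b /negbTE ngt_nb] := cntB_unanimous k i st_b.
by case: b st_b gt_b ngt_nb => /= _ -> ->; case: (k %% 3) => [|[|?]].
Qed.

End BinaryValidity.

Lemma bexec_unanimous (V : eqType) n m t H vinit adv1 adv2 advB Hs Hb c b K :
  3 * t + 1 <= n -> #|~: H| <= t ->
  unanimous H c b (binit V n m H vinit adv1 adv2) ->
  unanimous H c b (bexec V n m H vinit adv1 adv2 advB Hs Hb K).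
Proof.
move=> resilience few_malicious init_b.
by elim: K => //= K; apply: (bstep_unanimous resilience few_malicious).
Qed.

Theorem lemma4 (V : eqType) (n m t : nat) (H : {set 'I_n})
  (Hn : 3 * t + 1 <= n) (Ht : #|~: H| <= t)
  (vinit : 'I_n -> 'I_m -> option V)
  (adv1 adv2 : 'I_n -> 'I_n -> option ('I_m -> option V))
  (advB : nat -> 'I_n -> 'I_n -> option ('I_m -> bool))
  (Hs : 'I_n -> nat -> nat) (Hb : nat -> 'I_m -> bool)
  (K : nat) (c : 'I_m) :
  (forall i, i \in H ->
     @bh m (@bexec V n m H vinit adv1 adv2 advB Hs Hb K i) /\
     @bb m (@bexec V n m H vinit adv1 adv2 advB Hs Hb K i) c = false) ->
  exists v : V, forall i, i \in H ->
     @mba_out V n m H vinit adv1 adv2 advB Hs Hb K i c = Some v.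
Proof.
move=> decided0.
have /card_gt0P [i0 i0H] : 0 < #|H| by have := cardsC H; rewrite card_ord; lia.
have /exists_inP [j _ /eqP grade2] :
    [exists j in H, (mgc_out V n m H vinit adv1 adv2 j c).2 == 2].
  apply: contraT; rewrite negb_exists_in => /forall_inP no_grade2.
  have := bexec_unanimous advB Hs Hb K Hn Ht no_grade2 i0H.
  by rewrite (decided0 i0 i0H).2.
have [+ _] := mgc_out_grade2 grade2.
case out_j: (mgc_out _ _ _ _ _ _ _ j c).1 => [v|] // _.
exists v => i iH.
rewrite /mba_out (decided0 i iH).2.
by rewrite (mgc_graded_agreement Hn Ht i grade2) out_j.
Qed.
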